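(* Let $\omega\in\Omega^q(\log\mathscr{X}/\mathscr{C})$ and $\theta\in\mathrm{Der}(-\log\mathscr{X})$. Then the contraction $\langle\omega,\theta\rangle$ belongs to $\Omega^{q-1}(\log\mathscr{X}/\mathscr{C})$.
   Context: $V=\mathbb{C}^\ell$, $S=\mathbb{C}[x_1,\dots,x_\ell]$, $\Omega^q$ the module of polynomial $q$-forms. $\mathscr{X}$ is a central equidimensional subspace arrangement of codimension $k$ (finite set of linear subspaces of codimension $k$) with radical ideal $\mathcal{I}_\mathscr{X}$; $\mathscr{C}\supseteq\mathscr{X}$ is a reduced complete intersection subspace arrangement of codimension $k$ with $\mathcal{I}_\mathscr{C}=(h_1,\dots,h_k)$ radical, $h_1,\dots,h_k\in\mathcal{I}_\mathscr{X}$ a homogeneous regular sequence, $h=h_1\cdots h_k$. $\Omega^q(\log\mathscr{X}/\mathscr{C})=\{\omega\in\frac1h\Omega^q:\ \mathcal{I}_\mathscr{X}\omega\subseteq\frac1h\mathcal{I}_\mathscr{C}\Omega^q,\ d(\mathcal{I}_\mathscr{X})\wedge\omega\subseteq\frac1h\mathcal{I}_\mathscr{C}\Omega^{q+1}\}$. $\mathrm{Der}(-\log\mathscr{X})=\{\delta$ polynomial vector field : $\delta(\mathcal{I}_\mathscr{X})\subseteq\mathcal{I}_\mathscr{X}\}$. *)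

From HB Require Import structures.
From mathcomp Require Import all_boot all_order all_algebra.
From mathcomp Require Import reals.
From mathcomp Require Import complex.
From mathcomp Require Import mpoly fraction.
Set Implicit Arguments. Unset Strict Implicit. Unset Printing Implicit Defensive.
Import Order.TTheory GRing.Theory Num.Theory.
Local Open Scope ring_scope.

Notation "x %:F" := (@FracField.tofrac _ x) : ring_scope.

(* A form is given by its coefficients w I in front of dx_I, where
   I ranges over subsets of 'I_n (dx_I = dx_{i1} /\ ... /\ dx_{iq},
   i1 < ... < iq).                                                         *)
Definition dform (K : Type) (n : nat) := {set 'I_n} -> K.

Section Forms.
Variables (K : comNzRingType) (n : nat).

(* sign (-1)^{#{j in J | j < i}}: dx_i /\ dx_J = sgnf i J dx_{J u {i}}
   for i \notin J; also the sign of the contraction term.                 *)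
Definition sgnf (i : 'I_n) (J : {set 'I_n}) : K :=
  (-1) ^+ #|[set j in J | (j < i)%N]|.

Definition is_qform (q : nat) (w : dform K n) : Prop :=
  forall I : {set 'I_n}, #|I| != q -> w I = 0.

(* contraction <w, theta> of a form with the vector field
   theta = sum_i theta_i d/dx_i                                           *)
Definition contract (w : dform K n) (th : 'I_n -> K) : dform K n :=
  fun J => \sum_(i | i \notin J) sgnf i J * th i * w (i |: J).

(* (sum_i a_i dx_i) /\ w                                                   *)
Definition wedge1 (a : 'I_n -> K) (w : dform K n) : dform K n :=
  fun I => \sum_(i in I) sgnf i (I :\ i) * a i * w (I :\ i).

End Forms.

Section Arrangements.
Variables (R : realType) (n : nat).
Local Notation C := (R[i]).
Local Notation poly := {mpoly C[n]}.
Local Notation ratf := {fraction {mpoly C[n]}}.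

(* a linear subspace of C^n is the row space of a matrix V;
   it has codimension k                                                    *)
Definition subspace_codim (k : nat) (V : 'M[C]_n) : Prop :=
  \rank V = (n - k)%N.

Definition vanishing_ideal (X : seq 'M[C]_n) (f : poly) : Prop :=
  forall V, V \in X -> forall x : 'rV[C]_n, (x <= V)%MS ->
    f.@[fun j => x 0 j] = 0.

Definition radical_ideal (P : poly -> Prop) : Prop :=
  forall (f : poly) (m : nat), P (f ^+ m.+1) -> P f.

Definition gen_ideal (k : nat) (hs : 'I_k -> poly) (P : pred 'I_k) (f : poly)
  : Prop := exists g : 'I_k -> poly, f = \sum_(j | P j) g j * hs j.

Definition homogeneous (p : poly) : Prop :=
  exists d : nat, p \is ishomog1 d mdeg.

Definition regular_seq (k : nat) (hs : 'I_k -> poly) : Prop :=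
  ~ gen_ideal hs predT 1 /\
  forall (i : 'I_k) (g : poly),
    gen_ideal hs (fun j => (j < i)%N) (g * hs i) ->
    gen_ideal hs (fun j => (j < i)%N) g.

(* w \in (1/h) M Omega^q, where M is an ideal of S (M = S for Omega^q):
   w = eta / h with eta a polynomial q-form with coefficients in M       *)
Definition scaled_forms (h : poly) (M : poly -> Prop) (q : nat)
  (w : dform ratf n) : Prop :=
  exists eta : dform poly n,
    is_qform q eta /\ (forall I, M (eta I)) /\
    forall I, w I = (eta I)%:F / h%:F.

Definition log_forms (IX IC : poly -> Prop) (h : poly) (q : nat)
  (w : dform ratf n) : Prop :=
  [/\ scaled_forms h (fun _ => True) q w,
      (forall f, IX f -> scaled_forms h IC q (fun I => f%:F * w I)) &
      (forall f, IX f ->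
         scaled_forms h IC q.+1 (wedge1 (fun j => (mderiv j f)%:F) w))].

Definition der_log (IX : poly -> Prop) (th : 'I_n -> poly) : Prop :=
  forall f, IX f -> IX (\sum_j th j * mderiv j f).

End Arrangements.

From HB Require Import structures.
From mathcomp Require Import all_boot all_order all_algebra.
From mathcomp Require Import reals.
From mathcomp Require Import complex.
From mathcomp Require Import mpoly fraction.
From mathcomp Require Import ring.
Set Implicit Arguments. Unset Strict Implicit. Unset Printing Implicit Defensive.
Import Order.TTheory GRing.Theory Num.Theory.
Local Open Scope ring_scope.

(* Contraction with theta is S-linear and lowers degree, so it preserves
   every membership "in (1/h) M Omega" for an ideal M; this settles all
   conditions except the one on df /\ <w, theta>.  For that one, contraction
   is a derivation of degree -1:
     df /\ <w, theta> = theta(f) w - <df /\ w, theta>,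
   where theta(f) w lies in (1/h) I_C Omega^q because theta(f) is again in I_X,
   and <df /\ w, theta> because df /\ w lies in (1/h) I_C Omega^{q+1}. *)

Section ContractionSigns.
Variables (K : comNzRingType) (n : nat).

Lemma sgnf_setU1 (i j : 'I_n) (A : {set 'I_n}) : i \notin A ->
  sgnf K j (i |: A) = (if (i < j)%N then -1 else 1) * sgnf K j A.
Proof.
move=> iA; rewrite /sgnf.
have -> : [set x in i |: A | (x < j)%N] =
    if (i < j)%N then i |: [set x in A | (x < j)%N]
    else [set x in A | (x < j)%N].
  apply/setP => x; case: ifP => ij; rewrite !inE;
    case: (eqVneq x i) => [->|] /=; rewrite ?ij ?andbF //.
case: ifP => _; last by rewrite mul1r.
by rewrite cardsU1 inE (negbTE iA) /= exprS.
Qed.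

Lemma sgnf_mulss (i : 'I_n) (A : {set 'I_n}) : sgnf K i A * sgnf K i A = 1.
Proof. by rewrite /sgnf -exprMn mulrN1 opprK expr1n. Qed.

Lemma sgnf_exchange (i j : 'I_n) (I : {set 'I_n}) : i \in I -> j \notin I ->
  sgnf K j I * sgnf K i (j |: (I :\ i)) =
  - (sgnf K i (I :\ i) * sgnf K j (I :\ i)).
Proof.
move=> iI jI; have ij : j != i by apply: contraNneq jI => ->.
rewrite -{1}(setD1K iI) sgnf_setU1 ?setD11 //.
rewrite sgnf_setU1; last by rewrite in_setD1 negb_and jI orbT.
case: (ltngtP i j) => lt_ij; try ring.
by move: ij; rewrite -val_eqE /= lt_ij eqxx.
Qed.

End ContractionSigns.

Lemma setD1U1 (T : finType) (i j : T) (I : {set T}) : j != i ->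
  (j |: I) :\ i = j |: (I :\ i).
Proof.
move=> ji; apply/setP => x; rewrite !inE.
by case: (eqVneq x j) => [->|]; rewrite ?ji.
Qed.

Section Contraction.
Variables (K : comNzRingType) (n : nat).
Implicit Types (w : dform K n) (a th : 'I_n -> K) (I J : {set 'I_n}).

Lemma is_qform_contract q w th : is_qform q w -> is_qform q.-1 (contract w th).
Proof.
move=> wq J cardJ; rewrite /contract big1 // => i iJ; rewrite wq ?mulr0 //.
by case: q wq cardJ => [|q] _ cardJ; rewrite cardsU1 iJ // add1n eqSS.
Qed.

Lemma contract_0form w th J : is_qform 0 w -> contract w th J = 0.
Proof.
move=> w0; rewrite /contract big1 // => i iJ.
by rewrite w0 ?mulr0 // cardsU1 iJ.
Qed.

Lemma contractZ (c : K) w th J :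
  contract (fun I => c * w I) th J = c * contract w th J.
Proof.
by rewrite /contract mulr_sumr; apply: eq_bigr => i _; rewrite mulrCA.
Qed.

Lemma contract_setD1 w th I i : i \in I ->
  contract w th (I :\ i) = sgnf K i (I :\ i) * th i * w I +
    \sum_(j | j \notin I) sgnf K j (I :\ i) * th j * w (j |: (I :\ i)).
Proof.
move=> iI; rewrite /contract (bigD1 i) /= ?setD11 // setD1K //.
congr (_ + _); apply: eq_bigl => j; rewrite in_setD1.
by case: (eqVneq j i) => [->|_] /=; rewrite ?iI ?andbT.
Qed.

Lemma wedge1_setU1 a w I j : j \notin I ->
  wedge1 a w (j |: I) = sgnf K j I * a j * w I +
    \sum_(i in I) sgnf K i (j |: (I :\ i)) * a i * w (j |: (I :\ i)).
Proof.
move=> jI; rewrite /wedge1 (bigD1 j) /= ?setU11 // setU1K //.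
congr (_ + _); rewrite (eq_bigl (mem I)) => [|i]; last first.
  rewrite in_setU1; case: (eqVneq i j) => [->|_] /=; last by rewrite andbT.
  by rewrite (negbTE jI).
apply: eq_bigr => i iI; have ji : j != i by apply: contraNneq jI => ->.
by rewrite setD1U1.
Qed.

Lemma contract_wedge1 a w th I :
  contract (wedge1 a w) th I =
  (\sum_j th j * a j) * w I - wedge1 a (contract w th) I.
Proof.
suff -> : (\sum_j th j * a j) * w I =
    wedge1 a (contract w th) I + contract (wedge1 a w) th I.
  by rewrite [RHS]addrC addKr.
rewrite [X in _ = X + _]/wedge1 [X in _ = _ + X]/contract.
under [X in _ = X + _]eq_bigr => i iI do rewrite contract_setD1 // mulrDr.
under [X in _ = _ + X]eq_bigr => j jI do rewrite wedge1_setU1 // mulrDr.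
rewrite !big_split /= (bigID (mem I) predT) /= mulrDl !mulr_suml.
have diagI : \sum_(i in I) sgnf K i (I :\ i) * a i *
      (sgnf K i (I :\ i) * th i * w I) = \sum_(i in I) th i * a i * w I.
  by apply: eq_bigr => i _; rewrite -[RHS]mul1r -(sgnf_mulss K i (I :\ i)); ring.
have diagJ : \sum_(j | j \notin I) sgnf K j I * th j * (sgnf K j I * a j * w I)
    = \sum_(j | j \notin I) th j * a j * w I.
  by apply: eq_bigr => j _; rewrite -[RHS]mul1r -(sgnf_mulss K j I); ring.
rewrite diagI diagJ addrACA -[LHS]addr0; congr (_ + _); symmetry.
under [X in _ + X]eq_bigr do rewrite mulr_sumr.
under eq_bigr do rewrite mulr_sumr.
rewrite [X in _ + X]exchange_big /= -big_split big1 // => i iI.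
rewrite -big_split big1 // => j jI /=.
set W := w (j |: (I :\ i)).
have -> : sgnf K j I * th j * (sgnf K i (j |: (I :\ i)) * a i * W) =
    sgnf K j I * sgnf K i (j |: (I :\ i)) * (th j * a i * W) by ring.
by rewrite sgnf_exchange //; ring.
Qed.

End Contraction.

Definition is_ideal (A : comNzRingType) (M : A -> Prop) : Prop :=
  [/\ M 0, forall a b, M a -> M b -> M (a - b) & forall p a, M a -> M (p * a)].

Lemma is_idealD (A : comNzRingType) (M : A -> Prop) a b :
  is_ideal M -> M a -> M b -> M (a + b).
Proof.
case=> M0 MB _ Ma Mb; have -> : a + b = a - (0 - b) by rewrite sub0r opprK.
by apply: (MB) => //; apply: MB.
Qed.

Section ScaledForms.
Variables (R : realType) (n : nat).
Local Notation poly := {mpoly R[i][n]}.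
Local Notation ratf := {fraction {mpoly R[i][n]}}.
Implicit Types (h : poly) (M : poly -> Prop) (w : dform ratf n).

Lemma is_ideal_vanishing (X : seq 'M[R[i]]_n) : is_ideal (vanishing_ideal X).
Proof.
split=> [V _ x _|a b Ma Mb V XV x xV|p a Ma V XV x xV]; first by rewrite meval0.
  by rewrite mevalB (Ma V XV x xV) (Mb V XV x xV) subr0.
by rewrite mevalM (Ma V XV x xV) mulr0.
Qed.

Lemma scaled_forms_ext h M q w1 w2 :
  w1 =1 w2 -> scaled_forms h M q w1 -> scaled_forms h M q w2.
Proof.
move=> E [eta [etaq [Meta weta]]]; exists eta.
by do 2!split=> //; move=> I; rewrite -E.
Qed.

Lemma scaled_forms0 h M q : M 0 -> scaled_forms h M q (fun _ => 0).
Proof.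
move=> M0; exists (fun _ => 0).
by do 2!split=> //; move=> I; rewrite rmorph0 mul0r.
Qed.

Lemma scaled_forms_qform h M q w : scaled_forms h M q w -> is_qform q w.
Proof.
by case=> eta [etaq [_ weta]] I cardI; rewrite weta etaq // rmorph0 mul0r.
Qed.

Lemma scaled_formsB h M q w1 w2 : is_ideal M ->
  scaled_forms h M q w1 -> scaled_forms h M q w2 ->
  scaled_forms h M q (fun I => w1 I - w2 I).
Proof.
case=> _ MB _ [e1 [e1q [Me1 we1]]] [e2 [e2q [Me2 we2]]].
exists (fun I => e1 I - e2 I); split=> [I cardI|].
  by rewrite e1q ?e2q ?subr0.
by split=> I; [apply: MB | rewrite we1 we2 rmorphB mulrBl].
Qed.

Lemma scaled_forms_contract h M q w (th : 'I_n -> poly) : is_ideal M ->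
  scaled_forms h M q w ->
  scaled_forms h M q.-1 (contract w (fun j => (th j)%:F)).
Proof.
move=> idM [eta [etaq [Meta weta]]]; exists (contract eta th); split.
  exact: is_qform_contract.
split=> J; rewrite /contract.
  have [M0 _ MM] := idM.
  by apply: big_ind => // [x y Mx My|i _]; [exact: is_idealD | exact: MM].
rewrite rmorph_sum mulr_suml; apply: eq_bigr => i _.
by rewrite weta !rmorphM /= /sgnf rmorphXn rmorphN1 mulrA.
Qed.

Lemma scaled_forms_wedge1_contract h M q w (a th : 'I_n -> poly) :
  is_ideal M ->
  scaled_forms h M q (fun I => (\sum_j th j * a j)%:F * w I) ->
  scaled_forms h M q.+1 (wedge1 (fun j => (a j)%:F) w) ->
  scaled_forms h M q
    (wedge1 (fun j => (a j)%:F) (contract w (fun j => (th j)%:F))).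
Proof.
move=> idM thaw aw.
have := scaled_formsB idM thaw (scaled_forms_contract th idM aw).
apply: scaled_forms_ext => I /=; rewrite contract_wedge1 rmorph_sum.
by under eq_bigr do rewrite rmorphM; rewrite subKr.
Qed.

End ScaledForms.

Theorem lemma3p7 (R : realType) (n k : nat)
  (X CC : seq 'M[R[i]]_n) (hs : 'I_k -> {mpoly R[i][n]})
  (q : nat) (w : dform {fraction {mpoly R[i][n]}} n)
  (th : 'I_n -> {mpoly R[i][n]}) :
  (forall V, V \in X -> subspace_codim k V) ->
  (forall V, V \in CC -> subspace_codim k V) ->
  (forall V, V \in X -> exists2 W, W \in CC & (V == W)%MS) ->
  (forall f, vanishing_ideal CC f <-> gen_ideal hs predT f) ->
  radical_ideal (vanishing_ideal CC) ->
  (forall j, vanishing_ideal X (hs j)) ->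
  (forall j, homogeneous (hs j)) ->
  regular_seq hs ->
  log_forms (vanishing_ideal X) (vanishing_ideal CC) (\prod_j hs j) q w ->
  der_log (vanishing_ideal X) th ->
  log_forms (vanishing_ideal X) (vanishing_ideal CC) (\prod_j hs j) q.-1
    (contract w (fun j => (th j)%:F)).
Proof.
move=> _ _ _ _ _ _ _ _ [wq fw dfw] thX.
have idC := is_ideal_vanishing CC.
have idS : is_ideal (fun _ : {mpoly R[i][n]} => True) by [].
split=> [|f Xf|f Xf].
- exact: scaled_forms_contract th idS wq.
- apply: scaled_forms_ext (scaled_forms_contract th idC (fw f Xf)) => J.
  exact: contractZ.
- case: q wq fw dfw => [|q] wq fw dfw.
    have [C0 _ _] := idC.
    apply: scaled_forms_ext (scaled_forms0 _ _ C0) => I.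
    rewrite /wedge1 big1 // => i _.
    by rewrite contract_0form ?mulr0 //; exact: scaled_forms_qform wq.
  exact: scaled_forms_wedge1_contract idC (fw _ (thX f Xf)) (dfw f Xf).
Qed.
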